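(* Let $A, B$ be $2n\times 2n$ real symmetric positive semidefinite matrices whose kernels are symplectic subspaces of $\mathbb{R}^{2n}$. If $A$ lies in the convex hull of the symplectic orbit of $B$, i.e. $A = \sum_{i=1}^m \lambda_i M_i^T B M_i$ for some $m\ge 1$, some $M_1,\dots,M_m\in\operatorname{Sp}(2n)$, and some $\lambda_1,\dots,\lambda_m > 0$ with $\sum_i \lambda_i = 1$, then $d(A)\prec^w d(B)$.
   Context: Let $J = \begin{bmatrix} 0 & I_n \\ -I_n & 0\end{bmatrix}$. A real $2n\times 2n$ matrix $M$ is symplectic if $M^TJM = J$; $\operatorname{Sp}(2n)$ denotes the group of such matrices. A linear subspace $W\subseteq\mathbb{R}^{2n}$ is symplectic if for every $0\neq u\in W$ there is $v\in W$ with $u^TJv\neq 0$. For a real symmetric positive semidefinite $2n\times 2n$ matrix $A$ whose kernel is a symplectic subspace, there is $M\in\operatorname{Sp}(2n)$ with $M^TAM = D\oplus D$ where $D$ is an $n\times n$ diagonal matrix with non-negative entries, unique up to permutation of its diagonal entries; these are the symplectic eigenvalues of $A$, and $d(A) = (d_1(A),\dots,d_n(A))$ denotes them in non-decreasing order. For $x\in\mathbb{R}^n$, $x^\uparrow$ denotes $x$ rearranged in non-decreasing order. For $x,y\in\mathbb{R}^n$, $x\prec^w y$ ($x$ is weakly supermajorized by $y$) means $\sum_{j=1}^k x^\uparrow_j \ge \sum_{j=1}^k y^\uparrow_j$ for all $1\le k\le n$. *)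

From HB Require Import structures.
From mathcomp Require Import all_boot all_order all_algebra.
From mathcomp Require Import reals.
Set Implicit Arguments. Unset Strict Implicit. Unset Printing Implicit Defensive.
Import Order.TTheory GRing.Theory Num.Theory.
Local Open Scope ring_scope.

Section Symp.
Variables (R : realType) (n : nat).

Definition Jmx : 'M[R]_(n + n) := block_mx 0 1%:M (- 1%:M) 0.

Definition symplectic (M : 'M[R]_(n + n)) : Prop := M^T *m Jmx *m M = Jmx.

Definition psd (A : 'M[R]_(n + n)) : Prop :=
  A^T = A /\ forall x : 'cV[R]_(n + n), 0 <= (x^T *m A *m x) 0 0.

Definition ker_symplectic (A : 'M[R]_(n + n)) : Prop :=
  forall u : 'cV[R]_(n + n), A *m u = 0 -> u != 0 ->
    exists2 v : 'cV[R]_(n + n), A *m v = 0 & (u^T *m Jmx *m v) 0 0 != 0.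

Definition symp_eigs (A : 'M[R]_(n + n)) (d : 'rV[R]_n) : Prop :=
  (forall i, 0 <= d 0 i) /\
  (forall i j : 'I_n, (i <= j)%N -> d 0 i <= d 0 j) /\
  exists2 M : 'M[R]_(n + n), symplectic M &
    M^T *m A *m M = block_mx (diag_mx d) 0 0 (diag_mx d).

Definition sort_up (x : 'rV[R]_n) : seq R := sort <=%R [seq x 0 i | i <- enum 'I_n].

Definition weak_supmaj (x y : 'rV[R]_n) : Prop :=
  forall k : nat, (1 <= k <= n)%N ->
    \sum_(j < k) nth 0 (sort_up y) j <= \sum_(j < k) nth 0 (sort_up x) j.

End Symp.

From HB Require Import structures.
From mathcomp Require Import all_boot all_order all_algebra.
From mathcomp Require Import reals.
From mathcomp Require Import lra zify.
Import Order.TTheory GRing.Theory Num.Theory.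
Set Implicit Arguments. Unset Strict Implicit.
Local Open Scope ring_scope.

(* Trace minimisation: if [A] has symplectic spectrum [d], then twice the sum of
   its [k] smallest symplectic eigenvalues is the minimum of [tr (V^T A V)] over
   [2n x 2k] matrices with [V^T J V = J].  The minimum is attained on the first [k]
   symplectic pairs of a diagonalising basis.  For the lower bound, write
   [tr (V^T (D (+) D) V) = sum d_i w_i] with [w_i] the weight of [V] on the [i]-th
   symplectic pair; [J]-orthogonality forces weight at least [2(k - t)] on the
   pairs [t, ..., n-1], and Abel summation against the sorted [d_i] concludes.
   Since [M V] is again such a frame for symplectic [M], the trace of [V^T A V],
   for [A] a convex combination of the [M_i^T B M_i], is bounded below by the
   minimum for [B]; taking [V] optimal for [A] gives the weak majorisation. *)

Section OrthoProj.
Variable R : realFieldType.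

Definition orthoproj q (P : 'M[R]_q) : Prop := P^T = P /\ P *m P = P.

Lemma mxtrace_mulTmx_ge0 p q (X : 'M[R]_(p, q)) : 0 <= \tr (X^T *m X).
Proof.
apply: sumr_ge0 => i _; rewrite !mxE; apply: sumr_ge0 => j _.
by rewrite !mxE -expr2 sqr_ge0.
Qed.

Lemma mxtrace_mulTmxC p q (X Y : 'M[R]_(p, q)) : \tr (X^T *m Y) = \tr (Y^T *m X).
Proof. by rewrite -mxtrace_tr trmx_mul trmxK. Qed.

Lemma mulmx_trmx_eq0 p q (X : 'M[R]_(p, q)) : X *m X^T = 0 -> X = 0.
Proof.
move=> XXT0; apply/matrixP => i j.
have := congr1 (fun M : 'M[R]_p => M i i) XXT0; rewrite !mxE => sum0.
have /(_ j isT) : forall k, true -> X i k * X^T k i = 0.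
  by apply: psumr_eq0P => // k _; rewrite mxE -expr2 sqr_ge0.
by rewrite mxE => /eqP; rewrite mulf_eq0 orbb => /eqP.
Qed.

Lemma orthoprojC q (P : 'M[R]_q) : orthoproj P -> orthoproj (1%:M - P).
Proof.
case=> PT PP; split; first by rewrite raddfB /= trmx1 PT.
by rewrite mulmxBl mulmxBr !mul1mx mulmxBr mulmx1 PP subrr subr0.
Qed.

Lemma orthoproj_mxtrace p q (P : 'M[R]_p) (V : 'M[R]_(p, q)) : orthoproj P ->
  \tr (V^T *m P *m V) = \tr ((P *m V)^T *m (P *m V)).
Proof. by case=> PT PP; rewrite trmx_mul PT mulmxA -(mulmxA _ P P) PP. Qed.

(* With [Z] a row basis of [Y], [1 - Z^T (Z Z^T)^-1 Z] projects onto the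
   orthogonal complement of the row space of [Y]. *)
Lemma orthoproj_ker_exists p q (Y : 'M[R]_(p, q)) : exists P : 'M[R]_q,
  [/\ orthoproj P, Y *m P = 0 & \tr P = q%:R - (\rank Y)%:R].
Proof.
have [Z Zfree YZ] : exists2 Z : 'M[R]_(\rank Y, q), row_free Z & (Y <= Z)%MS.
  by exists (row_base Y); rewrite ?row_base_free ?eq_row_base.
pose W := Z *m Z^T.
have W_unit : W \in unitmx.
  rewrite -row_free_unit /row_free; apply/eqP/anti_leq; rewrite rank_leq_row /=.
  have KZ : kermx W *m Z = 0.
    apply: mulmx_trmx_eq0.
    by rewrite trmx_mul mulmxA -(mulmxA (kermx W)) mulmx_ker mul0mx.
  have K0 : kermx W = 0 by apply/eqP; rewrite -(mulmx_free_eq0 _ Zfree) KZ.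
  by have := mxrank_ker W; rewrite K0 mxrank0 => /esym/eqP; rewrite subn_eq0.
have WT : W^T = W by rewrite /W trmx_mul trmxK.
pose P := 1%:M - Z^T *m invmx W *m Z.
have ZP : Z *m P = 0.
  by rewrite mulmxBr mulmx1 !mulmxA -/W mulmxV // mul1mx subrr.
exists P; split.
- apply: orthoprojC; split; first by rewrite !trmx_mul trmxK trmx_inv WT mulmxA.
  by rewrite -!mulmxA (mulmxA Z) -/W (mulmxA (invmx W)) mulVmx // mul1mx.
- by rewrite -(mulmxKpV YZ) -!mulmxA ZP !mulmx0.
- by rewrite /P raddfB /= mxtrace1 mxtrace_mulC mulmxA -/W mulmxV // mxtrace1.
Qed.

Lemma mxtrace_orthoproj_le q r (P : 'M[R]_q) (V : 'M[R]_(q, r)) : orthoproj P ->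
  \tr (V^T *m P *m V) <= \tr (V^T *m V).
Proof.
move=> /orthoprojC Qproj; have := mxtrace_mulTmx_ge0 ((1%:M - P) *m V).
by rewrite -orthoproj_mxtrace // mulmxBr mulmx1 mulmxBl raddfB subr_ge0.
Qed.

Lemma mxtrace_orthoproj_twist_le p q (Jp : 'M[R]_p) (Jq P : 'M[R]_q) (X : 'M[R]_(p, q)) :
  Jp *m Jp^T = 1%:M -> Jq *m Jq^T = 1%:M -> orthoproj P ->
  \tr (P *m Jq^T *m X^T *m Jp *m X) <= \tr (X^T *m X).
Proof.
move=> Jp_orth Jq_orth Pproj; have [PT PP] := Pproj.
pose V := Jq^T *m X^T; pose a := Jp^T *m V^T *m P.
have -> : P *m Jq^T *m X^T *m Jp *m X = a^T *m X.
  by rewrite /a /V !trmx_mul !trmxK PT !mulmxA.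
have am_gm : 2 * \tr (a^T *m X) <= \tr (a^T *m a) + \tr (X^T *m X).
  have := mxtrace_mulTmx_ge0 (a - X).
  rewrite mulmxBr !(raddfB (@trmx _ _ _)) /= !mulmxBl !raddfB /=.
  rewrite (mxtrace_mulTmxC X a); lra.
have aa : \tr (a^T *m a) = \tr (V^T *m P *m V).
  rewrite /a !trmx_mul !trmxK PT -!mulmxA (mulmxA Jp) Jp_orth mul1mx.
  rewrite /V !mulmxA mxtrace_mulC !mulmxA PP -(mulmxA _ X Jq) mxtrace_mulC.
  by rewrite !mulmxA.
have VV : \tr (V^T *m V) = \tr (X^T *m X).
  by rewrite /V trmx_mul !trmxK -mulmxA (mulmxA Jq) Jq_orth mul1mx mxtrace_mulC.
have := mxtrace_orthoproj_le V Pproj; lra.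
Qed.

(* [Y = (1 - P) V] and [X = P V] are [Jp]-orthogonal, so [Jq = V^T Jp V] splits
   into their two contributions; an orthogonal projection killing the rows of [Y]
   keeps at least [q - rank Y] of its trace for [X]. *)
Lemma frame_mxtrace_ge p q (Jp P : 'M[R]_p) (Jq : 'M[R]_q) (V : 'M[R]_(p, q)) :
  Jp *m Jp^T = 1%:M -> Jq *m Jq^T = 1%:M -> orthoproj P -> P *m Jp = Jp *m P ->
  V^T *m Jp *m V = Jq ->
  q%:R - (\rank ((1%:M - P) *m V))%:R <= \tr (V^T *m P *m V).
Proof.
move=> Jp_orth Jq_orth Pproj PJ VJV.
have [PT PP] := Pproj; have [QT _] := orthoprojC Pproj.
have QJ : (1%:M - P) *m Jp = Jp *m (1%:M - P).
  by rewrite mulmxBl mulmxBr mul1mx mulmx1 PJ.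
have QP : (1%:M - P) *m P = 0 by rewrite mulmxBl mul1mx PP subrr.
have PQ : P *m (1%:M - P) = 0 by rewrite mulmxBr mulmx1 PP subrr.
set Y := (1%:M - P) *m V; pose X := P *m V.
have YJX : Y^T *m Jp *m X = 0.
  rewrite /Y /X trmx_mul QT -!mulmxA (mulmxA (1%:M - P)) QJ -mulmxA.
  by rewrite (mulmxA (1%:M - P)) QP mul0mx !mulmx0.
have XJY : X^T *m Jp *m Y = 0.
  rewrite /Y /X trmx_mul PT -!mulmxA (mulmxA P) PJ -mulmxA.
  by rewrite (mulmxA P) PQ mul0mx !mulmx0.
have VJV_split : Y^T *m Jp *m Y + X^T *m Jp *m X = Jq.
  have VYX : V = Y + X by rewrite /Y /X -mulmxDl subrK mul1mx.
  rewrite -VJV [in RHS]VYX (raddfD (@trmx _ _ _)) /= !mulmxDl !mulmxDr.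
  by rewrite YJX XJY addr0 add0r.
have [Pi [Piproj YPi trPi]] := orthoproj_ker_exists Y.
have -> : q%:R - (\rank Y)%:R = \tr (Pi *m Jq^T *m X^T *m Jp *m X).
  have PiE : Pi = Pi *m Jq^T *m (Y^T *m Jp *m Y + X^T *m Jp *m X).
    by rewrite VJV_split -mulmxA (mulmx1C Jq_orth) mulmx1.
  have trY : \tr (Pi *m Jq^T *m (Y^T *m Jp *m Y)) = 0.
    by rewrite mulmxA mxtrace_mulC !mulmxA YPi !mul0mx mxtrace0.
  by rewrite -trPi {1}PiE mulmxDr mxtraceD trY add0r !mulmxA.
rewrite orthoproj_mxtrace //.
exact: mxtrace_orthoproj_twist_le.
Qed.

End OrthoProj.

Section Sums.
Variable R : realDomainType.

(* Abel summation: [sum d_i e_i] is a nonnegative combination of the tail sums of [e]. *)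
Lemma abel_sum_ge0 N (d e : nat -> R) :
  (forall i, 0 <= d i) -> (forall i, (i.+1 < N)%N -> d i <= d i.+1) ->
  (forall t, (t <= N)%N -> 0 <= \sum_(t <= i < N) e i) ->
  0 <= \sum_(0 <= i < N) d i * e i.
Proof.
move=> d_ge0 d_mono tail_ge0.
have tail_ge t : (t <= N)%N ->
    d t * \sum_(t <= i < N) e i <= \sum_(t <= i < N) d i * e i.
  move Em : (N - t)%N => m; elim: m t Em => [|m IH] t Em tN.
    by rewrite !big_geq ?mulr0 //; lia.
  have tN' : (t < N)%N by lia.
  rewrite !(big_ltn tN') mulrDr lerD2l; apply: le_trans _ (IH t.+1 _ tN') => //; last lia.
  have [t1N|Nt1] := ltnP t.+1 N; last by rewrite !big_geq ?mulr0.
  by rewrite ler_wpM2r ?tail_ge0 ?d_mono.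
exact: le_trans (mulr_ge0 (d_ge0 0%N) (tail_ge0 0%N isT)) (tail_ge 0%N isT).
Qed.

Lemma weighted_sum_le n (d u w : 'I_n -> R) :
  (forall i, 0 <= d i) -> (forall i j : 'I_n, (i <= j)%N -> d i <= d j) ->
  (forall t, (t <= n)%N ->
     \sum_(i < n | (t <= i)%N) u i <= \sum_(i < n | (t <= i)%N) w i) ->
  \sum_i d i * u i <= \sum_i d i * w i.
Proof.
case: n d u w => [|n] d u w d_ge0 d_mono tails_le; first by rewrite !big_ord0.
have tailE t (F : 'I_n.+1 -> R) :
    \sum_(i < n.+1 | (t <= i)%N) F i = \sum_(t <= j < n.+1) F (inord j).
  by rewrite big_geq_mkord; apply: eq_bigr => i _; rewrite inord_val.
rewrite -subr_ge0 -sumrB.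
have -> : \sum_i (d i * w i - d i * u i) = \sum_i d i * (w i - u i).
  by apply: eq_bigr => i _; rewrite mulrBr.
rewrite (_ : \sum_i _ = \sum_(i < n.+1 | (0 <= i)%N) d i * (w i - u i)) ?tailE //.
apply: abel_sum_ge0 => [j|j jn|t tn]; first exact: d_ge0.
  by apply: d_mono; rewrite !inordK //; lia.
by rewrite sumrB -!tailE subr_ge0 tails_le.
Qed.

Lemma sum_tail_lt n k t : (k <= n)%N ->
  \sum_(i < n | (t <= i)%N) (i < k)%:R = (k - t)%:R :> R.
Proof.
move=> kn; rewrite (_ : \sum_(i < n | _) _ = \sum_(t <= i < n) (i < k)%:R); last first.
  by rewrite big_geq_mkord.
have count N : (\sum_(t <= i < N) (i < k) = minn k N - t)%N.
  elim: N => [|N IH]; first by rewrite big_geq // minn0.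
  have [tN|Nt] := leqP t N; last by rewrite big_geq //; lia.
  by rewrite big_nat_recr //= IH; case: (ltnP N k) => /=; lia.
by rewrite -natr_sum count (minn_idPl kn).
Qed.

End Sums.

Section SymplecticFrames.
Variable R : realType.

Lemma trmx_Jmx n : (Jmx R n)^T = - Jmx R n.
Proof.
by rewrite /Jmx tr_block_mx !trmx0 trmx1 raddfN /= trmx1 opp_block_mx !oppr0 opprK.
Qed.

Lemma Jmx_orthogonal n : Jmx R n *m (Jmx R n)^T = 1%:M.
Proof.
rewrite trmx_Jmx mulmxN /Jmx mulmx_block !mulmx0 !mul0mx !mulNmx !mulmxN !mulmx1.
by rewrite !addr0 !add0r opp_block_mx !opprK !oppr0 -scalar_mx_block.
Qed.

Definition symp_frame n k (V : 'M[R]_(n + n, k + k)) : Prop :=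
  V^T *m Jmx R n *m V = Jmx R k.

Lemma symp_frame_mul n k (M : 'M[R]_(n + n)) (V : 'M[R]_(n + n, k + k)) :
  symplectic M -> symp_frame V -> symp_frame (M *m V).
Proof.
move=> MJM VJV; rewrite /symp_frame trmx_mul -!mulmxA (mulmxA M^T) (mulmxA (M^T *m _)).
by rewrite MJM mulmxA.
Qed.

Lemma symplectic_rinv n (M : 'M[R]_(n + n)) :
  symplectic M -> exists2 N, symplectic N & M *m N = 1%:M.
Proof.
move=> MJM; pose N := (Jmx R n)^T *m M^T *m Jmx R n.
have NM : N *m M = 1%:M.
  by rewrite -!mulmxA (mulmxA M^T) MJM; apply: mulmx1C; apply: Jmx_orthogonal.
have MN : M *m N = 1%:M by apply: mulmx1C.
clearbody N.
exists N => //; rewrite /symplectic -[X in N^T *m X]MJM !mulmxA -trmx_mul MN trmx1.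
by rewrite mul1mx -mulmxA MN mulmx1.
Qed.

Definition dsum_mx m p (A : 'M[R]_(m, p)) : 'M[R]_(m + m, p + p) := block_mx A 0 0 A.

Lemma trmx_dsum_mx m p (A : 'M[R]_(m, p)) : (dsum_mx A)^T = dsum_mx A^T.
Proof. by rewrite /dsum_mx tr_block_mx !trmx0. Qed.

Lemma mul_dsum_mx m p r (A : 'M[R]_(m, p)) (B : 'M[R]_(p, r)) :
  dsum_mx A *m dsum_mx B = dsum_mx (A *m B).
Proof. by rewrite /dsum_mx mulmx_block !mulmx0 !mul0mx !addr0 !add0r. Qed.

Lemma dsum_mxJ n (D : 'M[R]_n) : dsum_mx D *m Jmx R n = Jmx R n *m dsum_mx D.
Proof.
by rewrite /dsum_mx /Jmx !mulmx_block !mulmx0 !mul0mx !mulNmx !mulmxN !mulmx1 !mul1mx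
  !addr0 !add0r.
Qed.

Lemma dsum_mx1B n (D : 'M[R]_n) : 1%:M - dsum_mx D = dsum_mx (1%:M - D).
Proof. by rewrite /dsum_mx scalar_mx_block opp_block_mx add_block_mx !oppr0 !addr0. Qed.

Lemma orthoproj_dsum_mx n (D : 'M[R]_n) : orthoproj D -> orthoproj (dsum_mx D).
Proof. by case=> DT DD; split; rewrite ?trmx_dsum_mx ?mul_dsum_mx ?DT ?DD. Qed.

Lemma dsum_mx_symp_frame n k (A : 'M[R]_(n, k)) :
  A^T *m A = 1%:M -> symp_frame (dsum_mx A).
Proof.
move=> AA; rewrite /symp_frame trmx_dsum_mx /dsum_mx /Jmx !mulmx_block.
by rewrite !mulmx0 !mul0mx !mulmx1 !mulmxN !mulmx1 !addr0 !add0r ?mulNmx AA !mul0mx.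
Qed.

Lemma symp_frame_tail_ge n k t (V : 'M[R]_(n + n, k + k)) : (t <= n)%N ->
  symp_frame V -> (k + k)%:R - (t + t)%:R <= \tr (V^T *m dsum_mx (copid_mx t) *m V).
Proof.
move=> tn VJV.
have Pproj : orthoproj (dsum_mx (copid_mx t : 'M[R]_n)).
  by apply/orthoproj_dsum_mx/orthoprojC; split; [exact: tr_pid_mx | exact: pid_mx_id].
apply: le_trans (frame_mxtrace_ge (Jmx_orthogonal n) (Jmx_orthogonal k) Pproj _ VJV).
  rewrite lerD2l lerN2 ler_nat dsum_mx1B /copid_mx subKr.
  apply: leq_trans (mxrankM_maxl _ _) _.
  by rewrite /dsum_mx rank_diag_block_mx rank_pid_mx.
exact: dsum_mxJ.
Qed.

Definition pair_weight n k (V : 'M[R]_(n + n, k)) (i : 'I_n) : R :=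
  \sum_a (usubmx V i a ^+ 2 + dsubmx V i a ^+ 2).

Lemma pair_weight_ge0 n k (V : 'M[R]_(n + n, k)) i : 0 <= pair_weight V i.
Proof. by apply: sumr_ge0 => a _; rewrite addr_ge0 ?sqr_ge0. Qed.

Lemma mxtrace_dsum_diag n k (V : 'M[R]_(n + n, k)) (d : 'rV[R]_n) :
  \tr (V^T *m dsum_mx (diag_mx d) *m V) = \sum_i d 0 i * pair_weight V i.
Proof.
have tr_diag (U : 'M[R]_(n, k)) :
    \tr (U^T *m diag_mx d *m U) = \sum_i d 0 i * \sum_a U i a ^+ 2.
  rewrite -mulmxA mxtrace_mulC mul_diag_mx; apply: eq_bigr => i _.
  by rewrite !mxE mulr_sumr; apply: eq_bigr => a _; rewrite !mxE expr2 mulrA.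
rewrite -{1 2}(vsubmxK V) /dsum_mx tr_col_mx mul_row_block !mulmx0 addr0 add0r.
rewrite mul_row_col mxtraceD !tr_diag -big_split /=; apply: eq_bigr => i _.
by rewrite -mulrDr /pair_weight big_split.
Qed.

Lemma copid_mx_diag n t : copid_mx t = diag_mx (\row_(i < n) (t <= i)%:R) :> 'M[R]_n.
Proof.
apply/matrixP => i j; rewrite /copid_mx /pid_mx !mxE.
have [->|ij] := eqVneq i j; last by move: ij; rewrite -val_eqE => /negbTE ->; rewrite subrr.
by rewrite !eqxx; case: ltnP; rewrite ?subrr ?subr0.
Qed.

Lemma symp_frame_weight_tail_ge n k t (V : 'M[R]_(n + n, k + k)) : (t <= n)%N ->
  symp_frame V -> (k + k)%:R - (t + t)%:R <= \sum_(i < n | (t <= i)%N) pair_weight V i.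
Proof.
move=> tn /(symp_frame_tail_ge tn); rewrite copid_mx_diag mxtrace_dsum_diag.
move/le_trans; apply; rewrite [X in _ <= X]big_mkcond; apply: ler_sum => i _.
by rewrite mxE; case: leqP; rewrite ?mul1r ?mul0r.
Qed.

Lemma dsum_diag_mxtrace_ge n k (d : 'rV[R]_n) (V : 'M[R]_(n + n, k + k)) :
  (k <= n)%N -> (forall i, 0 <= d 0 i) ->
  (forall i j : 'I_n, (i <= j)%N -> d 0 i <= d 0 j) -> symp_frame V ->
  2 * \sum_(i < n | (i < k)%N) d 0 i <= \tr (V^T *m dsum_mx (diag_mx d) *m V).
Proof.
move=> kn d_ge0 d_mono VJV; rewrite mxtrace_dsum_diag.
have -> : 2 * \sum_(i < n | (i < k)%N) d 0 i = \sum_i d 0 i * (2 * (i < k)%:R).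
  rewrite big_mkcond mulr_sumr; apply: eq_bigr => i _.
  by case: ltnP; rewrite ?mulr1 ?mulr0 // mulrC.
apply: weighted_sum_le => // t tn; rewrite -mulr_sumr sum_tail_lt //.
have [tk|kt] := leqP t k; last first.
  rewrite (eqP (ltnW kt : (k - t == 0)%N)) mulr0.
  by apply: sumr_ge0 => i _; exact: pair_weight_ge0.
by apply: le_trans (symp_frame_weight_tail_ge tn VJV); rewrite natrB // !natrD; lra.
Qed.

Lemma symp_eigs_mxtrace_ge n k (B : 'M[R]_(n + n)) d (W : 'M[R]_(n + n, k + k)) :
  (k <= n)%N -> symp_eigs B d -> symp_frame W ->
  2 * \sum_(i < n | (i < k)%N) d 0 i <= \tr (W^T *m B *m W).
Proof.
move=> kn [d_ge0 [d_mono [M MJM MBM]]] WJW.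
have [N NJN MN] := symplectic_rinv MJM.
have -> : W = M *m (N *m W) by rewrite mulmxA MN mul1mx.
rewrite trmx_mul -!mulmxA (mulmxA M^T) (mulmxA (M^T *m B)) MBM !mulmxA.
rewrite -(mulmxA _ _ W).
exact: dsum_diag_mxtrace_ge kn d_ge0 d_mono (symp_frame_mul NJN WJW).
Qed.

Lemma symp_eigs_mxtrace_attained n k (A : 'M[R]_(n + n)) d :
  (k <= n)%N -> symp_eigs A d ->
  exists2 V : 'M[R]_(n + n, k + k), symp_frame V &
    \tr (V^T *m A *m V) = 2 * \sum_(i < n | (i < k)%N) d 0 i.
Proof.
move=> kn [_ [_ [M MJM MAM]]]; pose S : 'M[R]_(n, k) := pid_mx k.
have nkk : minn n k = k by apply/minn_idPr.
have SS : S^T *m S = 1%:M by rewrite tr_pid_mx mul_pid_mx minnn nkk pid_mx_1.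
exists (M *m dsum_mx S); first exact: symp_frame_mul MJM (dsum_mx_symp_frame SS).
rewrite trmx_mul -!mulmxA (mulmxA M^T) (mulmxA (M^T *m A)) MAM.
rewrite trmx_dsum_mx !mul_dsum_mx /dsum_mx mxtrace_block mxtrace_mulC -mulmxA.
rewrite tr_pid_mx mul_pid_mx !minnn mul_diag_mx -mulr2n mulr_natl big_mkcond.
congr (_ *+ 2); apply: eq_bigr => i _; rewrite /pid_mx !mxE eqxx /=.
by case: ltnP; rewrite ?mulr1 ?mulr0.
Qed.

Lemma symp_orbit_hull_mxtrace_ge n k m (B : 'M[R]_(n + n)) d
    (M : 'I_m -> 'M[R]_(n + n)) (lam : 'I_m -> R) (V : 'M[R]_(n + n, k + k)) :
  (k <= n)%N -> symp_eigs B d -> (forall i, symplectic (M i)) ->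
  (forall i, 0 <= lam i) -> \sum_i lam i = 1 -> symp_frame V ->
  2 * \sum_(i < n | (i < k)%N) d 0 i <=
    \tr (V^T *m (\sum_i lam i *: ((M i)^T *m B *m M i)) *m V).
Proof.
move=> kn eigB MJM lam_ge0 lam1 VJV.
rewrite -[X in X <= _]mul1r -{1}lam1 mulr_suml mulmx_sumr mulmx_suml raddf_sum.
apply: ler_sum => i _; rewrite -scalemxAr -scalemxAl /= mxtraceZ ler_wpM2l //.
have := symp_eigs_mxtrace_ge kn eigB (symp_frame_mul (MJM i) VJV).
by rewrite trmx_mul !mulmxA.
Qed.

End SymplecticFrames.

Lemma sum_sort_up (R : realType) n (d : 'rV[R]_n) k :
  (forall i j : 'I_n, (i <= j)%N -> d 0 i <= d 0 j) -> (k <= n)%N ->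
  \sum_(j < k) nth 0 (sort_up d) j = \sum_(i < n | (i < k)%N) d 0 i.
Proof.
move=> d_mono kn.
have sorted_d : sorted <=%R [seq d 0 i | i <- enum 'I_n].
  rewrite sorted_map; apply: (@sub_sorted _ (relpre val leq)) => [i j /d_mono //|].
  by rewrite -sorted_map val_enum_ord iota_sorted.
rewrite /sort_up (sorted_sort le_trans sorted_d) (big_ord_widen n _ kn).
by apply: eq_bigr => i _; rewrite (nth_map i) ?size_enum_ord // nth_ord_enum.
Qed.

(* The hypotheses on [A] and [B] only serve to guarantee that [dA] and [dB] exist. *)
Theorem theorem3p4 (R : realType) (n : nat) (A B : 'M[R]_(n + n)) :
  psd A -> psd B -> ker_symplectic A -> ker_symplectic B ->
  (exists m : nat, (1 <= m)%N /\
     exists (M : 'I_m -> 'M[R]_(n + n)) (lam : 'I_m -> R),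
       [/\ forall i, symplectic (M i),
           forall i, 0 < lam i,
           \sum_(i < m) lam i = 1 &
           A = \sum_(i < m) lam i *: ((M i)^T *m B *m M i)]) ->
  forall dA dB : 'rV[R]_n, symp_eigs A dA -> symp_eigs B dB ->
    weak_supmaj dA dB.
Proof.
move=> _ _ _ _ [m [_ [M [lam [MJM lam_gt0 lam1 defA]]]]] dA dB eigA eigB k.
case/andP=> _ kn; have [_ [dA_mono _]] := eigA; have [_ [dB_mono _]] := eigB.
rewrite (sum_sort_up dA_mono kn) (sum_sort_up dB_mono kn).
have [V VJV trV] := symp_eigs_mxtrace_attained kn eigA.
have lam_ge0 i : 0 <= lam i by exact: ltW.
have := symp_orbit_hull_mxtrace_ge kn eigB MJM lam_ge0 lam1 VJV.
rewrite -defA trV; lra.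
Qed.
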